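(* In the setting of the context, let $(\sigma_t,\sigma'_t)_{t\ge0}$ be the monotone coupling started at $(\sigma_0,\sigma'_0)$. Then for every $t\ge0$, entrywise, \[ \Big(\mathbb E\,\mathrm{dist}(\sigma_t^{(i)},\sigma_t'^{(i)})\Big)_{i=1}^m\le \mathbf A^t\Big(\mathrm{dist}(\sigma_0^{(i)},\sigma_0'^{(i)})\Big)_{i=1}^m, \] where $\mathbf A=(\mathbf A_{ij})$ is the $m\times m$ matrix with $\mathbf A_{ii}=1-\frac1n+\beta K_{ii}(p_i-\frac1n)$ and $\mathbf A_{ij}=\beta p_iK_{ij}$ for $i\ne j$, with $K_{ij}=k_{ij}/n$.
   Context: Fix $m\ge1$, proportions $p_1,\dots,p_m>0$ with $\sum_ip_i=1$, a symmetric matrix $\mathbf K=(k_{ij})$ with all $k_{ij}>0$, and $\beta\ge0$; $n$ is a positive integer with $np_i\in\mathbb N$. The vertex set $V=\{1,\dots,n\}$ is partitioned into blocks $G_1,\dots,G_m$ with $|G_i|=np_i$; for $v\in G_i,w\in G_j$ put $K(v,w)=K_{ij}=k_{ij}/n$. For $\sigma\in\Omega=\{-1,+1\}^V$ and $v\in V$ let $S^v(\sigma)=\sum_{w\ne v}K(v,w)\sigma(w)$ and $r_+(s)=\frac{1+\tanh(\beta s)}2$. The monotone coupling is the grand coupling of Glauber dynamics in which, at each step, a vertex $I$ uniform on $V$ and an independent $U$ uniform on $[0,1]$ are drawn (shared by all chains), and each chain in state $\sigma$ sets the spin at $I$ to $+1$ if $U\le r_+(S^I(\sigma))$ and to $-1$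 otherwise, leaving other spins unchanged. For configurations $\sigma,\sigma'$, $\mathrm{dist}(\sigma^{(i)},\sigma'^{(i)})=\frac12\sum_{v\in G_i}|\sigma(v)-\sigma'(v)|$ is the number of vertices of $G_i$ where they differ. *)

From HB Require Import structures.
From mathcomp Require Import all_boot all_order all_algebra.
From mathcomp Require Import all_classical all_reals all_analysis.
Set Implicit Arguments. Unset Strict Implicit. Unset Printing Implicit Defensive.
Import Order.TTheory GRing.Theory Num.Theory.
Import numFieldNormedType.Exports.
Local Open Scope classical_set_scope.
Local Open Scope ring_scope.

Section Glauber.
Variable R : realType.

Definition tanhR (x : R) : R := (expR x - expR (- x)) / (expR x + expR (- x)).

Definition rplus (beta s : R) : R := (1 + tanhR (beta * s)) / 2.

(* spin configurations on V = 'I_n : true = +1, false = -1 *)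
Definition config (n : nat) := {ffun 'I_n -> bool}.
Definition spin (b : bool) : R := if b then 1 else -1.

(* K(v,w) = k_{g v, g w} / n, where g : V -> 'I_m assigns each vertex its block *)
Definition Kvw (n m : nat) (k : 'M[R]_m) (g : 'I_n -> 'I_m) (v w : 'I_n) : R :=
  k (g v) (g w) / n%:R.

Definition Sloc (n m : nat) (k : 'M[R]_m) (g : 'I_n -> 'I_m) (s : config n) (v : 'I_n) : R :=
  \sum_(w < n | w != v) Kvw k g v w * spin (s w).

Definition upd (n m : nat) (k : 'M[R]_m) (g : 'I_n -> 'I_m) (beta : R)
  (s : config n) (v : 'I_n) (u : R) : config n :=
  [ffun w => if w == v then (u <= rplus beta (Sloc k g s v)) else s w].

(* one step of the monotone (grand) coupling: shared (v,u) *)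
Definition cstep (n m : nat) (k : 'M[R]_m) (g : 'I_n -> 'I_m) (beta : R)
  (x : config n * config n) (v : 'I_n) (u : R) : config n * config n :=
  (upd k g beta x.1 v u, upd k g beta x.2 v u).

(* E[ f(X_t) | X_0 = x ] for the coupled chain, with I uniform on V and
   U uniform on [0,1] (Lebesgue measure), independent at each step. *)
Fixpoint cexp (n m : nat) (k : 'M[R]_m) (g : 'I_n -> 'I_m) (beta : R)
  (t : nat) (f : config n * config n -> R) (x : config n * config n) : R :=
  match t with
  | 0 => f x
  | t'.+1 => n%:R^-1 * \sum_(v < n)
       (\int[@lebesgue_measure R]_(u in `[0%R, 1%R]) cexp k g beta t' f (cstep k g beta x v u))
  end.

Definition distb (n m : nat) (g : 'I_n -> 'I_m) (i : 'I_m) (x : config n * config n) : R :=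
  (#|[set v : 'I_n | (g v == i) && (x.1 v != x.2 v)]|)%:R.

Definition Amat (n m : nat) (p : 'I_m -> R) (k : 'M[R]_m) (beta : R) : 'M[R]_m :=
  \matrix_(i, j) (if i == j
                  then 1 - n%:R^-1 + beta * (k i i / n%:R) * (p i - n%:R^-1)
                  else beta * p i * (k i j / n%:R)).

End Glauber.

From HB Require Import structures.
From mathcomp Require Import all_boot all_order all_algebra.
From mathcomp Require Import all_classical all_reals all_analysis.
From mathcomp Require Import measurable_realfun ring lra.
Import Order.TTheory GRing.Theory Num.Theory.
Import numFieldNormedType.Exports.
Set Implicit Arguments. Unset Strict Implicit. Unset Printing Implicit Defensive.
Local Open Scope ring_scope.

(* In the monotone coupling both chains update the chosen vertex v with the
   same uniform u, so afterwards they disagree at v exactly when u falls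
   between the two update probabilities r+(S^v s) and r+(S^v s'): this has
   probability |r+(S^v s) - r+(S^v s')|. As tanh is 1-Lipschitz, that is at
   most beta * sum_(w <> v) K(v,w) [s w <> s' w]. Averaging over v and summing
   over the block G_i, a double count gives E dist_i after one step
   <= (A dist)_i. The entries of A are nonnegative (every block is nonempty,
   so p_i >= 1/n), hence the one-step bound iterates along the recursion
   defining the t-step expectation and yields A^t. *)

Section Tanh.
Variable R : realType.

Lemma tanhRE (x : R) : tanhR x = 1 - 2 / (expR x * expR x + 1).
Proof.
rewrite /tanhR expRN; have e0 := expR_gt0 x; set e := expR x in e0 *.
have e_neq0 : e != 0 by rewrite gt_eqF.
have den_neq0 : e * e + 1 != 0 by rewrite gt_eqF // addr_gt0 // mulr_gt0.
have sum_neq0 : e + e^-1 != 0 by rewrite gt_eqF // addr_gt0 // invr_gt0.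
by field; rewrite ?e_neq0 ?den_neq0 ?sum_neq0.
Qed.

Lemma is_derive_tanhR (x : R) : is_derive x 1 (@tanhR R) (1 - tanhR x ^+ 2).
Proof.
have e0 := expR_gt0 x.
have den_neq0 : expR x * expR x + 1 != 0 by rewrite gt_eqF // addr_gt0 // mulr_gt0.
have Dden := is_deriveD (is_deriveM (is_derive_expR x) (is_derive_expR x))
  (is_derive_cst (1 : R) x 1).
have D := is_deriveB (is_derive_cst (1 : R) x 1)
  (is_deriveZ 2 (@is_deriveV _ (expR * expR + cst 1) x _ 1 den_neq0 Dden)).
lazymatch type of D with is_derive _ _ ?F _ =>
  have -> : @tanhR R = F by apply/funext => y; rewrite tanhRE end.
apply: (is_derive_eq D); rewrite !fctE /= ?fctE /GRing.scale /=.
by set e := expR x in den_neq0 *; field.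
Qed.

Lemma tanhR_itv (x : R) : -1 <= tanhR x <= 1.
Proof.
rewrite tanhRE; have e0 := expR_gt0 x.
have den_ge1 : 1 <= expR x * expR x + 1 by rewrite lerDr mulr_ge0 // ltW.
have inv_le1 : (expR x * expR x + 1)^-1 <= 1 by rewrite invf_le1 // (lt_le_trans ltr01).
have inv_ge0 : 0 <= (expR x * expR x + 1)^-1 by rewrite invr_ge0 (le_trans ler01).
by apply/andP; split; lra.
Qed.

(* Mean value theorem: the derivative [1 - tanh^2] lies in [0, 1]. *)
Lemma tanhR_lipschitz (a b : R) : `|tanhR a - tanhR b| <= `|a - b|.
Proof.
wlog ab : a b / a <= b.
  move=> H; case: (leP a b) => [/H //|/ltW /H].
  by rewrite distrC [`|a - b|]distrC.
have dv x : derivable (@tanhR R) x 1 by case: (is_derive_tanhR x).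
rewrite distrC.
have [c _ ->] := @MVT_segment R (@tanhR R) (fun x => 1 - tanhR x ^+ 2) a b ab
  (fun x _ => is_derive_tanhR x) (derivable_within_continuous (fun x _ => dv x)).
rewrite normrM [`|a - b|]distrC ler_piMl //.
have /andP[t1 t2] := tanhR_itv c.
by rewrite ger0_norm; nra.
Qed.

Lemma rplus_itv (beta s : R) : 0 <= rplus beta s <= 1.
Proof.
by rewrite /rplus; have /andP[? ?] := tanhR_itv (beta * s); apply/andP; split; lra.
Qed.

Lemma rplus_lipschitz (beta s1 s2 : R) : 0 <= beta ->
  `|rplus beta s1 - rplus beta s2| <= beta / 2 * `|s1 - s2|.
Proof.
move=> beta_ge0; rewrite /rplus -mulrBl opprD addrACA subrr add0r.
rewrite normrM [`|2^-1|]ger0_norm // mulrAC ler_wpM2r //.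
by apply: le_trans (tanhR_lipschitz _ _) _; rewrite -mulrBr normrM ger0_norm.
Qed.

End Tanh.

Section ThresholdIntegral.
Local Open Scope classical_set_scope.
Local Open Scope ring_scope.
Variable R : realType.
Notation mu := (@lebesgue_measure R).

Lemma Rintegral_sum_indic (I : finType) (D : set R) (c : I -> R) (C : I -> set R) :
  measurable D -> (forall i, 0 <= c i) -> (forall i, measurable (C i)) ->
  (forall i, (mu (C i `&` D) < +oo)%E) ->
  \int[mu]_(u in D) (\sum_i c i * \1_(C i) u) = \sum_i c i * fine (mu (C i `&` D)).
Proof.
move=> mD c_ge0 mC C_fin; rewrite /Rintegral.
under eq_integral do rewrite -sumEFin.
rewrite ge0_integral_sum //; last 2 first.
- move=> i; apply/measurable_EFinP; apply: measurable_funM.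
    exact: measurable_cst.
  by apply: measurable_indic; exact: mC.
- by move=> i x _; rewrite lee_fin mulr_ge0.
rewrite (eq_bigr (fun i => (c i * fine (mu (C i `&` D)))%:E)) ?sumEFin // => i _.
under eq_integral do rewrite EFinM.
rewrite ge0_integralZl_EFin //; last first.
  by apply/measurable_EFinP; apply: measurable_indic; exact: mC.
rewrite integral_indic //; last exact: mC.
rewrite -[RHS]/((c i)%:E * (fine (mu (C i `&` D)))%:E)%E fineK //.
by rewrite ge0_fin_numE ?measure_ge0.
Qed.

Lemma sum_bool2 (F : bool * bool -> R) :
  \sum_b F b = F (true, true) + F (true, false) + F (false, true) + F (false, false).
Proof.
have -> : \sum_b F b = \sum_(b | xpredT b.1 && xpredT b.2) F (b.1, b.2).
  by apply: eq_bigr => [[]].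
by rewrite -(pair_big xpredT xpredT (fun a b => F (a, b))) /= !big_bool /= !addrA.
Qed.

Variables (r1 r2 : R).
Hypotheses (r1_itv : 0 <= r1 <= 1) (r2_itv : 0 <= r2 <= 1).

Definition cell (b : bool * bool) : set R :=
  [set u | (0 <= u <= 1) && ((u <= r1) == b.1) && ((u <= r2) == b.2)].

Definition cell_itv (b : bool * bool) : interval R :=
  match b with
  | (true, true) => `[0, Num.min r1 r2]
  | (true, false) => `]r2, r1]
  | (false, true) => `]r1, r2]
  | (false, false) => `]Num.max r1 r2, 1]
  end.

Definition cell_weight (b : bool * bool) : R :=
  match b with
  | (true, true) => Num.min r1 r2
  | (true, false) => Num.max (r1 - r2) 0
  | (false, true) => Num.max (r2 - r1) 0
  | (false, false) => 1 - Num.max r1 r2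
  end.

Lemma cellE b : cell b = [set` cell_itv b].
Proof.
move: r1_itv r2_itv => /andP[? ?] /andP[? ?].
apply/seteqP; split => u; rewrite /cell /= in_itv;
  case: b => [[] []] /=; rewrite ?le_min ?gt_max;
  repeat match goal with
  | |- context[(?a <= ?b)%R] => case: (leP a b) => ?
  | |- context[(?a < ?b)%R] => case: (ltP a b) => ?
  end; rewrite //=; lra.
Qed.

Lemma lebesgue_measure_cell b : mu (cell b) = (cell_weight b)%:E.
Proof.
move: r1_itv r2_itv => /andP[? ?] /andP[? ?].
rewrite cellE lebesgue_measure_itv.
case: b => [[] []] /=; rewrite ?lte_fin ?minElt ?maxElt; case: (ltP r1 r2) => ? /=;
  do 2 (try (case: ltP => ? /=)); try done; rewrite -?EFinB; congr (_%:E); lra.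
Qed.

Lemma cell_weight_ge0 b : 0 <= cell_weight b.
Proof. by rewrite -lee_fin -lebesgue_measure_cell measure_ge0. Qed.

Lemma sum_cell_weight : \sum_b cell_weight b = 1.
Proof.
move: r1_itv r2_itv => /andP[? ?] /andP[? ?].
rewrite sum_bool2 /= ?minElt ?maxElt; case: ltP => ? /=;
  do 2 (try (case: ltP => ? /=)); lra.
Qed.

Lemma cell_weight_discordant :
  cell_weight (true, false) + cell_weight (false, true) = `|r1 - r2|.
Proof.
rewrite /= ?maxElt; case: (ltP r1 r2) => ?.
  by rewrite ltr0_norm ?subr_lt0 //; do 2 (case: ltP => ? /=); lra.
by rewrite ger0_norm ?subr_ge0 //; do 2 (case: ltP => ? /=); lra.
Qed.

Lemma Rintegral_threshold_pair (h : bool * bool -> R) : (forall b, 0 <= h b) ->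
  \int[mu]_(u in `[0, 1]) h (u <= r1, u <= r2) = \sum_b cell_weight b * h b.
Proof.
move=> h_ge0.
have cell_sub b : cell b `<=` `[0, 1].
  by move=> u /andP[/andP[/andP[u0 u1] _] _]; rewrite /= in_itv /= u0 u1.
transitivity (\int[mu]_(u in `[0, 1]) \sum_b h b * \1_(cell b) u).
  apply: eq_Rintegral => u; rewrite inE /= in_itv /= => /andP[u0 u1].
  rewrite (bigD1 (u <= r1, u <= r2)) //= big1 ?addr0 => [|b /negPf hb].
    by rewrite indicE mem_set ?mulr1 //= /cell /= u0 u1 !eqxx.
  rewrite indicE memNset ?mulr0 // /cell /= u0 u1 => /andP[/eqP e1 /eqP e2].
  by move: hb; case: b e1 e2 => b1 b2 /= <- <-; rewrite eqxx.
rewrite Rintegral_sum_indic //.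
- by apply: eq_bigr => b _; rewrite setIidl // lebesgue_measure_cell mulrC.
- by move=> b; rewrite cellE; exact: measurable_itv.
- by move=> b; rewrite setIidl // lebesgue_measure_cell ltry.
Qed.

End ThresholdIntegral.

Section CoupledStep.
Variables (R : realType) (m n : nat) (k : 'M[R]_m) (g : 'I_n -> 'I_m) (beta : R).
Notation mu := (@lebesgue_measure R).
Notation cpair := (config n * config n)%type.

Definition set_spin (s : config n) (v : 'I_n) (b : bool) : config n :=
  [ffun w => if w == v then b else s w].

Definition coupled_set (x : cpair) (v : 'I_n) (b : bool * bool) : cpair :=
  (set_spin x.1 v b.1, set_spin x.2 v b.2).

Definition rate (s : config n) (v : 'I_n) : R := rplus beta (Sloc k g s v).

Definition step_weight (x : cpair) (v : 'I_n) (b : bool * bool) : R :=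
  cell_weight (rate x.1 v) (rate x.2 v) b.

Definition step_mean (h : cpair -> R) (x : cpair) : R :=
  n%:R^-1 * \sum_v \sum_b step_weight x v b * h (coupled_set x v b).

Lemma step_weight_ge0 x v b : 0 <= step_weight x v b.
Proof. exact/cell_weight_ge0/rplus_itv/rplus_itv. Qed.

Lemma Rintegral_cstep (h : cpair -> R) x v : (forall z, 0 <= h z) ->
  \int[mu]_(u in `[0%R, 1%R]) h (cstep k g beta x v u) =
  \sum_b step_weight x v b * h (coupled_set x v b).
Proof.
move=> h_ge0.
exact: (Rintegral_threshold_pair (rplus_itv _ _) (rplus_itv _ _)
  (fun b => h_ge0 (coupled_set x v b))).
Qed.

Lemma cexp_ge0 (f : cpair -> R) t x : (forall z, 0 <= f z) -> 0 <= cexp k g beta t f x.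
Proof.
move=> f_ge0; elim: t x => [|t IH] x //=.
rewrite mulr_ge0 ?invr_ge0 ?ler0n // sumr_ge0 // => v _.
by apply: Rintegral_ge0 => u _; exact: IH.
Qed.

Lemma cexpS (f : cpair -> R) t x : (forall z, 0 <= f z) ->
  cexp k g beta t.+1 f x = step_mean (cexp k g beta t f) x.
Proof.
move=> f_ge0 /=; congr (_ * _); apply: eq_bigr => v _.
by apply: Rintegral_cstep => z; exact: cexp_ge0.
Qed.

Lemma step_mean_le (h1 h2 : cpair -> R) x : (forall z, h1 z <= h2 z) ->
  step_mean h1 x <= step_mean h2 x.
Proof.
move=> h12; rewrite ler_wpM2l ?invr_ge0 ?ler0n //.
by apply: ler_sum => v _; apply: ler_sum => b _; rewrite ler_wpM2l ?step_weight_ge0.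
Qed.

Lemma step_mean_sum (I : finType) (c : I -> R) (h : I -> cpair -> R) x :
  step_mean (fun z => \sum_i c i * h i z) x = \sum_i c i * step_mean (h i) x.
Proof.
rewrite /step_mean.
under eq_bigr => v _ do under eq_bigr => b _ do rewrite mulr_sumr.
under eq_bigr => v _ do rewrite exchange_big.
rewrite exchange_big mulr_sumr; apply: eq_bigr => i _.
rewrite mulrCA; congr (_ * _); rewrite mulr_sumr; apply: eq_bigr => v _.
by rewrite mulr_sumr; apply: eq_bigr => b _; rewrite mulrCA.
Qed.

End CoupledStep.

Section Disagreement.
Variables (R : realType) (m n : nat) (p : 'I_m -> R) (k : 'M[R]_m) (g : 'I_n -> 'I_m)
  (beta : R).
Hypotheses (k_ge0 : forall i j, 0 <= k i j) (beta_ge0 : 0 <= beta) (n_gt0 : (0 < n)%N)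
  (block_size : forall i, \sum_v (g v == i)%:R = n%:R * p i).
Notation cpair := (config n * config n)%type.
Notation disagree x w := ((x.1 w != x.2 w)%:R : R).

(* [distb] counts a set of [classical_sets], whence [asboolb]. *)
Lemma distbE j (x : cpair) :
  distb R g j x = \sum_w (g w == j)%:R * disagree x w.
Proof.
rewrite /distb -sum1_card natr_sum big_mkcond /=; apply: eq_bigr => w _.
rewrite unfold_in /= asboolb.
by case: (g w == j); case: (x.1 w != x.2 w); rewrite ?mulr1 ?mulr0.
Qed.

Lemma sum_distb_blocks (F : 'I_m -> R) (x : cpair) :
  \sum_l F l * distb R g l x = \sum_w disagree x w * F (g w).
Proof.
under eq_bigr do rewrite distbE mulr_sumr.
rewrite exchange_big; apply: eq_bigr => w _.
rewrite (bigD1 (g w)) //= eqxx mul1r big1 ?addr0 1?mulrC // => l /negPf gwl.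
by rewrite eq_sym gwl mul0r mulr0.
Qed.

Lemma distb_coupled_set j x v b :
  distb R g j (coupled_set x v b) =
  distb R g j x - (g v == j)%:R * disagree x v + (g v == j)%:R * (b.1 != b.2)%:R.
Proof.
rewrite !distbE (bigD1 v) //= [in RHS](bigD1 v) //= !ffunE eqxx.
under eq_bigr => w wv do rewrite !ffunE (negbTE wv).
lra.
Qed.

Lemma sum_step_weight_distb j x v :
  \sum_b step_weight k g beta x v b * distb R g j (coupled_set x v b) =
  distb R g j x - (g v == j)%:R * disagree x v +
  (g v == j)%:R * `|rate k g beta x.1 v - rate k g beta x.2 v|.
Proof.
have r1_itv := rplus_itv beta (Sloc k g x.1 v).
have r2_itv := rplus_itv beta (Sloc k g x.2 v).
have w_sum := sum_cell_weight r1_itv r2_itv.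
under eq_bigr do rewrite distb_coupled_set mulrDr.
rewrite big_split /= -mulr_suml w_sum mul1r -cell_weight_discordant; congr (_ + _).
by rewrite sum_bool2 /= !mulr0 !mulr1 /step_weight /rate; ring.
Qed.

Lemma spin_dist (a b : bool) : `|spin R a - spin R b| = 2 * (a != b)%:R.
Proof.
by case: a; case: b;
  rewrite /spin /= ?subrr ?normr0 ?mulr0 ?mulr1 // ?opprK -?opprD ?normrN ger0_norm.
Qed.

Lemma Sloc_dist (x : cpair) v :
  `|Sloc k g x.1 v - Sloc k g x.2 v| <=
  2 * \sum_(w < n | w != v) Kvw k g v w * disagree x w.
Proof.
rewrite /Sloc -sumrB mulr_sumr.
apply: le_trans (ler_norm_sum _ _ _) _; apply: ler_sum => w _.
by rewrite -mulrBr normrM spin_dist ger0_norm ?divr_ge0 // mulrCA.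
Qed.

Lemma rate_dist (x : cpair) v :
  `|rate k g beta x.1 v - rate k g beta x.2 v| <=
  beta * \sum_(w < n | w != v) Kvw k g v w * disagree x w.
Proof.
apply: le_trans (rplus_lipschitz _ _ beta_ge0) _.
by rewrite -mulrA ler_wpM2l // ler_pdivrMl // Sloc_dist.
Qed.

Lemma block_sum_Kvw j (c : 'I_n -> R) :
  \sum_v (g v == j)%:R * \sum_(w < n | w != v) Kvw k g v w * c w =
  \sum_w c w * (k j (g w) / n%:R) * (\sum_v (g v == j)%:R - (g w == j)%:R).
Proof.
have offdiag v : (g v == j)%:R * \sum_(w < n | w != v) Kvw k g v w * c w =
    \sum_w c w * (k j (g w) / n%:R) * ((g v == j)%:R * (w != v)%:R).
  rewrite big_mkcond mulr_sumr; apply: eq_bigr => w _; rewrite /Kvw.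
  case: (eqVneq (g v) j) => [<-|_]; case: (w != v) => /=;
    by rewrite ?mul0r ?mulr0 ?mul1r ?mulr1 // mulrC.
rewrite (eq_bigr _ (fun v _ => offdiag v)) exchange_big; apply: eq_bigr => w _.
rewrite -mulr_sumr; congr (_ * _).
rewrite (bigD1 w) //= [in RHS](bigD1 w) //= eqxx mulr0 add0r.
under eq_bigr => v vw do rewrite (eq_sym w v) vw mulr1.
by rewrite addrC addrK.
Qed.

Lemma Amat_scaled j l : n%:R != 0 :> R ->
  n%:R * Amat n p k beta j l =
  (n%:R - 1) * (l == j)%:R + beta * (k j l / n%:R) * (n%:R * p j - (l == j)%:R).
Proof.
by move=> n_neq0; rewrite mxE eq_sym; case: eqP => [->|_] /=; field.
Qed.

Lemma step_mean_distb_le j (x : cpair) :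
  step_mean k g beta (distb R g j) x <= \sum_l Amat n p k beta j l * distb R g l x.
Proof.
have n_pos : 0 < n%:R :> R by rewrite ltr0n.
have n_neq0 := lt0r_neq0 n_pos.
rewrite -(ler_pM2l n_pos) /step_mean mulrA mulfV // mul1r.
have rates_dist : \sum_v (g v == j)%:R * `|rate k g beta x.1 v - rate k g beta x.2 v| <=
    beta * \sum_w disagree x w * (k j (g w) / n%:R) * (n%:R * p j - (g w == j)%:R).
  rewrite -block_size -block_sum_Kvw mulr_sumr; apply: ler_sum => v _.
  by rewrite mulrCA ler_wpM2l ?ler0n ?rate_dist.
have scaled_rhs w : n%:R * (disagree x w * Amat n p k beta j (g w)) =
    (n%:R - 1) * ((g w == j)%:R * disagree x w) +
    beta * (disagree x w * (k j (g w) / n%:R) * (n%:R * p j - (g w == j)%:R)).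
  by rewrite mulrCA Amat_scaled //; ring.
rewrite sum_distb_blocks mulr_sumr (eq_bigr _ (fun w _ => scaled_rhs w)).
rewrite big_split /= -!mulr_sumr -distbE.
under eq_bigr do rewrite sum_step_weight_distb.
rewrite big_split /= sumrB sumr_const card_ord -distbE -[_ *+ n]mulr_natl.
lra.
Qed.

End Disagreement.

Lemma exprn_mx_ge0 (R : numDomainType) (m : nat) (M : 'M[R]_m) t :
  (forall i j, 0 <= M i j) -> forall i j, 0 <= (M ^+ t) i j.
Proof.
move=> M_ge0; elim: t => [|t IH] i j; first by rewrite expr0 mxE ler0n.
by rewrite exprS -mulmxE mxE; apply: sumr_ge0 => l _; rewrite mulr_ge0.
Qed.

Section Contraction.
Variables (R : realType) (m n : nat) (p : 'I_m -> R) (k : 'M[R]_m) (g : 'I_n -> 'I_m)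
  (beta : R).
Hypotheses (n_gt0 : (0 < n)%N) (p_gt0 : forall i, 0 < p i)
  (k_ge0 : forall i j, 0 <= k i j) (beta_ge0 : 0 <= beta)
  (block_card : forall i, (#|[set v : 'I_n | g v == i]|)%:R = n%:R * p i).
Local Notation A := (Amat n p k beta).

Lemma sum_block_indicator i : \sum_v (g v == i)%:R = n%:R * p i.
Proof.
rewrite -block_card -sum1_card natr_sum [RHS]big_mkcond.
by apply: eq_bigr => v _; rewrite inE; case: (g v == i).
Qed.

Lemma invn_le_p i : n%:R^-1 <= p i.
Proof.
have n_pos : 0 < n%:R :> R by rewrite ltr0n.
rewrite -(ler_pM2l n_pos) mulfV ?lt0r_neq0 // -block_card ler1n -(ltr0n R) block_card.
by rewrite mulr_gt0.
Qed.

Lemma Amat_ge0 i j : 0 <= A i j.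
Proof.
rewrite mxE; case: eqP => _; last by rewrite !mulr_ge0 ?divr_ge0 ?ler0n // ltW.
have inv_le1 : n%:R^-1 <= 1 :> R by rewrite invf_le1 ?ler1n ?ltr0n.
have : 0 <= beta * (k i i / n%:R) * (p i - n%:R^-1).
  by rewrite !mulr_ge0 ?divr_ge0 ?subr_ge0 ?invn_le_p.
lra.
Qed.

Lemma mulmx_col_distb (M : 'M[R]_m) (x : config n * config n) i :
  (M *m \col_j distb R g j x) i ord0 = \sum_j M i j * distb R g j x.
Proof. by rewrite mxE; apply: eq_bigr => j _; rewrite mxE. Qed.

Lemma cexp_distb_le t x i :
  cexp k g beta t (distb R g i) x <= ((A ^+ t) *m \col_j distb R g j x) i ord0.
Proof.
elim: t x i => [|t IH] x i; first by rewrite expr0 mul1mx mxE.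
have IH' z : cexp k g beta t (distb R g i) z <= \sum_j (A ^+ t) i j * distb R g j z.
  by rewrite -mulmx_col_distb.
rewrite cexpS => [|z]; last by rewrite ler0n.
apply: le_trans (step_mean_le k g beta x IH') _.
rewrite step_mean_sum exprSr -mulmxE -mulmxA [in leRHS]mxE.
apply: ler_sum => j _; rewrite mulmx_col_distb ler_wpM2l ?exprn_mx_ge0 //.
- exact: Amat_ge0.
- exact: (step_mean_distb_le k_ge0 beta_ge0 n_gt0 sum_block_indicator j x).
Qed.

End Contraction.

Theorem lemma4p2 (R : realType) (m n : nat) (p : 'I_m -> R) (k : 'M[R]_m)
  (beta : R) (g : 'I_n -> 'I_m) :
  (0 < m)%N -> (0 < n)%N ->
  (forall i, 0 < p i) -> \sum_(i < m) p i = 1 ->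
  (forall i j, k i j = k j i) -> (forall i j, 0 < k i j) ->
  0 <= beta ->
  (forall i, (#|[set v : 'I_n | g v == i]|)%:R = n%:R * p i) ->
  forall (s0 s0' : config n) (t : nat) (i : 'I_m),
    cexp k g beta t (distb R g i) (s0, s0')
      <= ((Amat n p k beta ^+ t) *m \col_(j < m) distb R g j (s0, s0')) i ord0.
Proof.
move=> _ n_gt0 p_gt0 _ _ k_gt0 beta_ge0 block_card s0 s0' t i.
exact: cexp_distb_le n_gt0 p_gt0 (fun i j => ltW (k_gt0 i j)) beta_ge0 block_card t _ i.
Qed.
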